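(* Let $\langle v,w\rangle=g(v,w)+\mathrm{i}\,\omega(v,w)$ for $v,w\in V$, and let $M\in\mathcal{G}$. Then for all $v,w\in V$: $$\langle C_Mv,w\rangle=\langle v,C_{M^{-1}}w\rangle,\qquad \langle D_Mv,w\rangle=\begin{cases}-\langle D_{M^{-1}}w,v\rangle&\text{(bosons)}\\ +\langle D_{M^{-1}}w,v\rangle&\text{(fermions)}\end{cases},$$ and, when $C_M$ is invertible so that $Z_M=C_M^{-1}D_M$ is defined, $$\langle Z_Mv,w\rangle=\begin{cases}+\langle Z_Mw,v\rangle&\text{(bosons)}\\ -\langle Z_Mw,v\rangle&\text{(fermions)}\end{cases}.$$
   Context: $V=\mathbb{R}^{2N}$. Bosons: symplectic form $\Omega^{ab}$ (standard $\begin{pmatrix}0&\mathbb{1}\\-\mathbb{1}&0\end{pmatrix}$), $\mathcal{G}=\mathrm{Sp}(2N,\mathbb{R})$, $J$ a complex structure ($J^2=-\mathbb{1}$) with $J\Omega J^\intercal=\Omega$ and $G:=-J\Omega$ positive definite. Fermions: metric $G=\mathbb{1}$, $\mathcal{G}=\mathrm{SO}(2N,\mathbb{R})$, $J$ orthogonal with $J^2=-\mathbb{1}$, and $\Omega:=JG$. In both cases $g=G^{-1}$ and $\omega=\Omega^{-1}$ are the corresponding bilinear forms on $V$, and $V$ is regarded as a complex vector space with $\mathrm{i}$ acting as $J$. $C_M=\frac12(M-JMJ)$, $D_M=\frac12(M+JMJ)$. *)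

From HB Require Import structures.
From mathcomp Require Import all_boot all_order all_algebra.
From mathcomp Require Import complex.
Set Implicit Arguments. Unset Strict Implicit. Unset Printing Implicit Defensive.
Import Order.TTheory GRing.Theory Num.Theory.
Local Open Scope ring_scope.

(* V = R^(2N) is represented by column vectors 'cV[R]_(N + N);
   linear maps (J, M, C_M, ...) act on the left; bivectors (Omega^{ab},
   G^{ab}) and bilinear forms (g_{ab}, omega_{ab}) are square matrices. *)

Definition bform (R : ringType) (n : nat) (B : 'M[R]_n) (v w : 'cV[R]_n) : R :=
  (v^T *m B *m w) 0 0.

Definition Omega_std (R : ringType) (N : nat) : 'M[R]_(N + N) :=
  block_mx 0 1%:M (- 1%:M) 0.

Definition posdef (R : numDomainType) (n : nat) (G : 'M[R]_n) : Prop :=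
  G^T = G /\ forall v : 'cV[R]_n, v != 0 -> 0 < bform G v v.

Definition CM (R : fieldType) (n : nat) (J M : 'M[R]_n) : 'M[R]_n :=
  2%:R^-1 *: (M - J *m M *m J).
Definition DM (R : fieldType) (n : nat) (J M : 'M[R]_n) : 'M[R]_n :=
  2%:R^-1 *: (M + J *m M *m J).
Definition ZM (R : fieldType) (n : nat) (J M : 'M[R]_n) : 'M[R]_n :=
  invmx (CM J M) *m DM J M.

(* <v,w> = g(v,w) + i omega(v,w) with g = G^{-1}, omega = Omega^{-1} *)
Definition cinner (R : rcfType) (n : nat) (G Om : 'M[R]_n) (v w : 'cV[R]_n)
  : R[i] :=
  ((bform (invmx G) v w)%:C + 'i * (bform (invmx Om) v w)%:C)%C.

From HB Require Import structures.
From mathcomp Require Import all_boot all_order all_algebra.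
From mathcomp Require Import complex.
Set Implicit Arguments.
Unset Strict Implicit.
Unset Printing Implicit Defensive.
Import Order.TTheory GRing.Theory Num.Theory.
Local Open Scope ring_scope.

(* In both cases there is an invertible form [B] (omega for bosons, g for
   fermions) with [M^T B = B M^-1] and [J^T B = - B J]; the other form of
   <.,.> is [B J] (bosons) or [- B J] (fermions).  The [J]-linear part [C_M]
   commutes with [J] and the antilinear part [D_M] anticommutes with it, so
   both stay [B]-adjoint to their [M^-1] counterparts, but [D_M] changes sign
   against [B J].  For [Z_M = C_M^-1 D_M] one also needs
   [C_M D_(M^-1) = - D_M C_(M^-1)], the antilinear part of [M M^-1 = 1].
   Symmetry of g and antisymmetry of omega turn these adjointness relations
   into the stated (anti)symmetries of <.,.>. *)

Lemma mulmx1_invmx (R : comUnitRingType) (n : nat) (A B : 'M[R]_n) :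
  A *m B = 1%:M -> invmx A = B.
Proof.
move=> AB1; have [uA _] := mulmx1_unit AB1.
by rewrite -[invmx A]mulmx1 -AB1 mulmxA mulVmx // mul1mx.
Qed.

Lemma unitmx_congruence (R : comUnitRingType) (n : nat) (A P : 'M[R]_n) :
  A *m P *m A^T = P -> P \in unitmx -> A \in unitmx.
Proof.
move=> APA uP; suff /mulmx1_unit[] : A *m (P *m A^T *m invmx P) = 1%:M by [].
by rewrite !mulmxA APA mulmxV.
Qed.

Lemma adjoint_congruence (R : comUnitRingType) (n : nat) (A P : 'M[R]_n) :
  A *m P *m A^T = P -> P \in unitmx -> A^T *m invmx P = invmx P *m invmx A.
Proof.
move=> APA uP; have uA := unitmx_congruence APA uP.
have PA : P *m A^T = invmx A *m P by rewrite -{2}APA -!mulmxA mulKmx.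
by rewrite -[A^T](mulKmx uP) PA -!mulmxA mulmxV // mulmx1.
Qed.

Lemma adjoint_invmx_mul (R : comUnitRingType) (n : nat)
    (B C D C' D' : 'M[R]_n) :
  B \in unitmx -> C \in unitmx ->
  C^T *m B = B *m C' -> D^T *m B = B *m D' -> C *m D' = - (D *m C') ->
  (invmx C *m D)^T *m B = - (B *m (invmx C *m D)).
Proof.
move=> uB uC CB DB CD.
have uC' : C' \in unitmx.
  by rewrite -(mulKmx uB C') -CB !unitmx_mul unitmx_inv uB unitmx_tr uC.
have CiB : invmx C^T *m B = B *m invmx C'.
  by apply: (canRL (mulmxK uC')); rewrite -mulmxA -CB mulKmx ?unitmx_tr.
have DC' : D' *m invmx C' = - (invmx C *m D).
  by rewrite -(mulKmx uC D') CD mulmxN mulNmx mulmxA mulmxK.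
by rewrite trmx_mul trmx_inv -mulmxA CiB mulmxA DB -mulmxA DC' mulmxN.
Qed.

Lemma CM_add_DM (R : numFieldType) (n : nat) (J X : 'M[R]_n) :
  CM J X + DM J X = X.
Proof.
rewrite /CM /DM -scalerDr addrACA addNr addr0 -mulr2n -scaler_nat scalerA.
by rewrite mulVf ?scale1r // pnatr_eq0.
Qed.

Section LinearAntilinear.
Variables (R : numFieldType) (n : nat) (J : 'M[R]_n).
Hypothesis JJ : J *m J = - 1%:M.

Lemma invmxJ : invmx J = - J.
Proof. by apply: mulmx1_invmx; rewrite mulmxN JJ opprK. Qed.

Lemma CM_commute X : J *m CM J X = CM J X *m J.
Proof.
rewrite /CM -scalemxAl -scalemxAr; congr (_ *: _).
rewrite mulmxBl mulmxBr !mulmxA JJ -[J *m X *m J *m J]mulmxA JJ.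
by rewrite !mulmxN !mulmx1 !mulNmx !mul1mx !opprK addrC.
Qed.

Lemma DM_anticommute X : J *m DM J X = - (DM J X *m J).
Proof.
rewrite /DM -scalemxAl -scalemxAr -scalerN; congr (_ *: _).
rewrite mulmxDl mulmxDr !mulmxA JJ -[J *m X *m J *m J]mulmxA JJ.
by rewrite !mulmxN !mulmx1 !mulNmx !mul1mx opprD addrC !opprK.
Qed.

Lemma commute_anticommute_eq0 F :
  J *m F = F *m J -> J *m F = - (F *m J) -> F = 0.
Proof.
move=> JF JFN; have FJ0 : F *m J = 0.
  have : 2%:R *: (F *m J) = 0 by rewrite scaler_nat mulr2n -{1}JF JFN addNr.
  by move/eqP; rewrite scaler_eq0 pnatr_eq0 => /eqP.
by rewrite -[F]mulmx1 -[1%:M]opprK -JJ mulmxN mulmxA FJ0 mul0mx oppr0.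
Qed.

Lemma CM_mul_DM X Y :
  X *m Y = 1%:M -> CM J X *m DM J Y = - (DM J X *m CM J Y).
Proof.
move=> XY; apply/eqP; rewrite -addr_eq0; apply/eqP.
set F := _ + _; set E := CM J X *m CM J Y + DM J X *m DM J Y.
have EF : E + F = 1%:M.
  by rewrite addrACA -!mulmxDr (addrC (DM J Y)) -mulmxDl !CM_add_DM.
have JE : J *m E = E *m J.
  rewrite mulmxDr mulmxDl !mulmxA CM_commute DM_anticommute !mulNmx.
  by rewrite -!mulmxA CM_commute DM_anticommute !mulmxN opprK !mulmxA.
apply: commute_anticommute_eq0.
  have -> : F = 1%:M - E by rewrite -EF addrC addKr.
  by rewrite mulmxBr mulmxBl mulmx1 mul1mx JE.
rewrite mulmxDr mulmxDl !mulmxA CM_commute DM_anticommute !mulNmx.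
by rewrite -!mulmxA CM_commute DM_anticommute !mulmxN !mulmxA opprD.
Qed.

Variables (B M Mi : 'M[R]_n).
Hypotheses (JB : J^T *m B = - (B *m J)) (MB : M^T *m B = B *m Mi).

Lemma JMJ_adjoint : (J *m M *m J)^T *m B = B *m (J *m Mi *m J).
Proof.
rewrite !trmx_mul -!mulmxA JB !mulmxN [M^T *m _]mulmxA MB.
by rewrite -[B *m Mi *m J]mulmxA [J^T *m _]mulmxA JB mulNmx opprK !mulmxA.
Qed.

Lemma CM_adjoint : (CM J M)^T *m B = B *m CM J Mi.
Proof.
rewrite /CM linearZ /= -scalemxAl -scalemxAr linearB /=.
by rewrite mulmxBl mulmxBr MB JMJ_adjoint.
Qed.

Lemma DM_adjoint : (DM J M)^T *m B = B *m DM J Mi.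
Proof.
rewrite /DM linearZ /= -scalemxAl -scalemxAr linearD /=.
by rewrite mulmxDl mulmxDr MB JMJ_adjoint.
Qed.

Lemma CM_adjointJ : (CM J M)^T *m (B *m J) = (B *m J) *m CM J Mi.
Proof. by rewrite mulmxA CM_adjoint -!mulmxA CM_commute. Qed.

Lemma DM_adjointJ : (DM J M)^T *m (B *m J) = - ((B *m J) *m DM J Mi).
Proof. by rewrite mulmxA DM_adjoint -!mulmxA DM_anticommute mulmxN opprK. Qed.

Hypotheses (MMi : M *m Mi = 1%:M) (uB : B \in unitmx) (uC : CM J M \in unitmx).

Lemma ZM_adjoint : (ZM J M)^T *m B = - (B *m ZM J M).
Proof.
apply: adjoint_invmx_mul => //.
- exact: CM_adjoint.
- exact: DM_adjoint.
- exact: CM_mul_DM.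
Qed.

Lemma ZM_adjointJ : (ZM J M)^T *m (B *m J) = (B *m J) *m ZM J M.
Proof.
have CiJ : invmx (CM J M) *m J = J *m invmx (CM J M).
  by apply: (canRL (mulmxK uC)); rewrite -mulmxA CM_commute mulKmx.
rewrite mulmxA ZM_adjoint mulNmx /ZM -!mulmxA.
rewrite -[DM J M *m J]opprK -DM_anticommute !mulmxN opprK.
by rewrite [invmx _ *m (J *m _)]mulmxA CiJ !mulmxA.
Qed.

End LinearAntilinear.

Lemma bformMl (R : comNzRingType) (n : nat) (B A : 'M[R]_n) v w :
  bform B (A *m v) w = bform (A^T *m B) v w.
Proof. by rewrite /bform trmx_mul !mulmxA. Qed.

Lemma bformMr (R : comNzRingType) (n : nat) (B A : 'M[R]_n) v w :
  bform B v (A *m w) = bform (B *m A) v w.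
Proof. by rewrite /bform !mulmxA. Qed.

Lemma bform_trmx (R : comNzRingType) (n : nat) (B : 'M[R]_n) v w :
  bform B v w = bform B^T w v.
Proof.
rewrite /bform.
have -> : w^T *m B^T *m v = (v^T *m B *m w)^T by rewrite !trmx_mul trmxK mulmxA.
by rewrite [RHS]mxE.
Qed.

Lemma bformN (R : comNzRingType) (n : nat) (B : 'M[R]_n) v w :
  bform (- B) v w = - bform B v w.
Proof. by rewrite /bform mulmxN mulNmx mxE. Qed.

Section InnerProduct.
Variables (R : rcfType) (n : nat) (G Om : 'M[R]_n).

Lemma cinner_adjoint (A A' : 'M[R]_n) v w :
  A^T *m invmx G = invmx G *m A' -> A^T *m invmx Om = invmx Om *m A' ->
  cinner G Om (A *m v) w = cinner G Om v (A' *m w).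
Proof. by move=> AG AOm; rewrite /cinner !bformMl !bformMr AG AOm. Qed.

Hypotheses (Gt : (invmx G)^T = invmx G) (Omt : (invmx Om)^T = - invmx Om).

Lemma cinner_swap (A A' : 'M[R]_n) v w :
  A^T *m invmx G = invmx G *m A' -> A^T *m invmx Om = - (invmx Om *m A') ->
  cinner G Om (A *m v) w = cinner G Om (A' *m w) v.
Proof.
move=> AG AOm; rewrite /cinner !(bformMl _ A) !(bform_trmx _ (A' *m w)).
by rewrite !bformMr Gt Omt AG AOm mulNmx.
Qed.

Lemma cinner_swapN (A A' : 'M[R]_n) v w :
  A^T *m invmx G = - (invmx G *m A') -> A^T *m invmx Om = invmx Om *m A' ->
  cinner G Om (A *m v) w = - cinner G Om (A' *m w) v.
Proof.
move=> AG AOm; rewrite /cinner !(bformMl _ A) !(bform_trmx _ (A' *m w)).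
by rewrite !bformMr Gt Omt AG AOm mulNmx !bformN !rmorphN mulrN opprD opprK.
Qed.

End InnerProduct.

Lemma Omega_std_sqr (R : comNzRingType) (N : nat) :
  Omega_std R N *m Omega_std R N = - 1%:M.
Proof.
rewrite /Omega_std mulmx_block scalar_mx_block opp_block_mx.
by rewrite !mul0mx !mulmx0 !mul1mx !mulmx1 !add0r !addr0 oppr0.
Qed.

Lemma tr_Omega_std (R : comNzRingType) (N : nat) :
  (Omega_std R N)^T = - Omega_std R N.
Proof.
rewrite /Omega_std tr_block_mx !trmx0 trmx1 linearN /= trmx1.
by rewrite opp_block_mx opprK oppr0.
Qed.

Lemma unitmx_Omega_std (R : comUnitRingType) (N : nat) :
  Omega_std R N \in unitmx.
Proof.
suff /mulmx1_unit[] : Omega_std R N *m (- Omega_std R N) = 1%:M by [].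
by rewrite mulmxN Omega_std_sqr opprK.
Qed.

Section Bosons.
Variables (R : rcfType) (n : nat) (J M Om : 'M[R]_n).
Hypotheses (JJ : J *m J = - 1%:M) (uOm : Om \in unitmx) (Omt : Om^T = - Om).
Hypotheses (JOm : J *m Om *m J^T = Om) (MOm : M *m Om *m M^T = Om).
Local Notation G := (- (J *m Om)).
Hypothesis Gt : G^T = G.

Let invG : invmx G = invmx Om *m J.
Proof.
apply: mulmx1_invmx.
by rewrite mulNmx -mulmxA (mulmxA Om) mulmxV // mul1mx JJ opprK.
Qed.

Let invGt : (invmx G)^T = invmx G.
Proof. by rewrite trmx_inv Gt. Qed.

Let invOmt : (invmx Om)^T = - invmx Om.
Proof.
rewrite trmx_inv Omt; apply: mulmx1_invmx.
by rewrite mulmxN mulNmx opprK mulmxV.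
Qed.

Let JOmi : J^T *m invmx Om = - (invmx Om *m J).
Proof. by rewrite (adjoint_congruence JOm uOm) (invmxJ JJ) -mulmxN. Qed.

Let MOmi : M^T *m invmx Om = invmx Om *m invmx M.
Proof. exact: adjoint_congruence. Qed.

Let MMi : M *m invmx M = 1%:M.
Proof. by rewrite mulmxV // (unitmx_congruence MOm). Qed.

Lemma boson_CM_adjoint v w :
  cinner G Om (CM J M *m v) w = cinner G Om v (CM J (invmx M) *m w).
Proof.
apply: cinner_adjoint; rewrite ?invG.
- exact (CM_adjointJ JJ JOmi MOmi).
- exact (CM_adjoint JOmi MOmi).
Qed.

Lemma boson_DM_swap v w :
  cinner G Om (DM J M *m v) w = - cinner G Om (DM J (invmx M) *m w) v.
Proof.
apply: cinner_swapN => //; rewrite ?invG.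
- exact (DM_adjointJ JJ JOmi MOmi).
- exact (DM_adjoint JOmi MOmi).
Qed.

Lemma boson_ZM_swap : CM J M \in unitmx ->
  forall v w, cinner G Om (ZM J M *m v) w = cinner G Om (ZM J M *m w) v.
Proof.
have uOmi : invmx Om \in unitmx by rewrite unitmx_inv.
move=> uC v w; apply: cinner_swap => //; rewrite ?invG.
- exact (ZM_adjointJ JJ JOmi MOmi MMi uOmi uC).
- exact (ZM_adjoint JJ JOmi MOmi MMi uOmi uC).
Qed.

End Bosons.

Section Fermions.
Variables (R : rcfType) (n : nat) (J M : 'M[R]_n).
Hypotheses (JJ : J *m J = - 1%:M) (JJt : J *m J^T = 1%:M) (MMt : M *m M^T = 1%:M).
Local Notation G := (1%:M : 'M[R]_n).
Local Notation Om := (J *m G).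

Let Jt : J^T = - J.
Proof. by rewrite -(mulmx1_invmx JJt) invmxJ. Qed.

Let JG : J^T *m G = - (G *m J).
Proof. by rewrite mulmx1 mul1mx Jt. Qed.

Let invM : invmx M = M^T.
Proof. exact: mulmx1_invmx. Qed.

Let MG : M^T *m G = G *m invmx M.
Proof. by rewrite mulmx1 mul1mx invM. Qed.

Let MMi : M *m invmx M = 1%:M.
Proof. by rewrite invM. Qed.

Let invOm : invmx Om = - (G *m J).
Proof. by rewrite mulmx1 mul1mx invmxJ. Qed.

Let invGt : (invmx G)^T = invmx G.
Proof. by rewrite invmx1 trmx1. Qed.

Let invOmt : (invmx Om)^T = - invmx Om.
Proof. by rewrite invOm mul1mx linearN /= Jt. Qed.

Lemma fermion_CM_adjoint v w :
  cinner G Om (CM J M *m v) w = cinner G Om v (CM J (invmx M) *m w).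
Proof.
apply: cinner_adjoint; rewrite ?invOm ?invmx1.
- exact (CM_adjoint JG MG).
- by rewrite mulmxN mulNmx (CM_adjointJ JJ JG MG).
Qed.

Lemma fermion_DM_swap v w :
  cinner G Om (DM J M *m v) w = cinner G Om (DM J (invmx M) *m w) v.
Proof.
apply: cinner_swap => //; rewrite ?invOm ?invmx1.
- exact (DM_adjoint JG MG).
- by rewrite mulmxN mulNmx (DM_adjointJ JJ JG MG).
Qed.

Lemma fermion_ZM_swap : CM J M \in unitmx ->
  forall v w, cinner G Om (ZM J M *m v) w = - cinner G Om (ZM J M *m w) v.
Proof.
move=> uC v w; apply: cinner_swapN => //; rewrite ?invOm ?invmx1.
- exact (ZM_adjoint JJ JG MG MMi (unitmx1 _ _) uC).
- by rewrite mulmxN mulNmx (ZM_adjointJ JJ JG MG MMi (unitmx1 _ _) uC).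
Qed.

End Fermions.

Theorem lemma3 (R : rcfType) (N : nat) :
  (* bosons *)
  (forall (J M : 'M[R]_(N + N)),
     J *m J = - 1%:M ->
     J *m Omega_std R N *m J^T = Omega_std R N ->
     posdef (- (J *m Omega_std R N)) ->
     M *m Omega_std R N *m M^T = Omega_std R N ->
     let G := - (J *m Omega_std R N) in
     let Om := Omega_std R N in
     (forall v w : 'cV[R]_(N + N),
        cinner G Om (CM J M *m v) w = cinner G Om v (CM J (invmx M) *m w)) /\
     (forall v w : 'cV[R]_(N + N),
        cinner G Om (DM J M *m v) w = - cinner G Om (DM J (invmx M) *m w) v) /\
     (CM J M \in unitmx ->
      forall v w : 'cV[R]_(N + N),
        cinner G Om (ZM J M *m v) w = cinner G Om (ZM J M *m w) v)) /\
  (* fermions *)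
  (forall (J M : 'M[R]_(N + N)),
     J *m J = - 1%:M ->
     J *m J^T = 1%:M ->
     M *m M^T = 1%:M -> \det M = 1 ->
     let G := (1%:M : 'M[R]_(N + N)) in
     let Om := J *m G in
     (forall v w : 'cV[R]_(N + N),
        cinner G Om (CM J M *m v) w = cinner G Om v (CM J (invmx M) *m w)) /\
     (forall v w : 'cV[R]_(N + N),
        cinner G Om (DM J M *m v) w = cinner G Om (DM J (invmx M) *m w) v) /\
     (CM J M \in unitmx ->
      forall v w : 'cV[R]_(N + N),
        cinner G Om (ZM J M *m v) w = - cinner G Om (ZM J M *m w) v)).
Proof.
split.
- move=> J M JJ JOm [Gt _] MOm G Om.
  have uOm := unitmx_Omega_std R N; have Omt := tr_Omega_std R N.
  split; [|split].
  + exact: boson_CM_adjoint.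
  + exact: boson_DM_swap.
  + exact: boson_ZM_swap.
- move=> J M JJ JJt MMt _ G Om; split; [|split].
  + exact: fermion_CM_adjoint.
  + exact: fermion_DM_swap.
  + exact: fermion_ZM_swap.
Qed.
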